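(* Let $X$ and $Y$ be linear spaces. A function $f:X\to Y$ satisfies $$3f(x+3y)-f(3x+y)=12[f(x+y)+f(x-y)]-16[f(x)+f(y)]+12f(2y)-4f(2x)$$ for all $x,y\in X$ if and only if there exist additive functions $A,H:X\to Y$ and cubic functions $C,G:X\to Y$ such that $f(x)=H(x)+G(x)$ for all $x\in X$, where $H(x)=A(2x)-8A(x)$ and $G(x)=C(2x)-2C(x)$ for all $x\in X$.
   Context: A function $g:X\to Y$ is called additive if $g(x+y)=g(x)+g(y)$ for all $x,y\in X$. A function $g:X\to Y$ is called cubic if it satisfies $g(x+2y)-3g(x+y)+3g(x)-g(x-y)=6g(y)$ for all $x,y\in X$. *)

From HB Require Import structures.
From mathcomp Require Import all_boot all_order all_algebra.
From mathcomp Require Import reals.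
Set Implicit Arguments. Unset Strict Implicit. Unset Printing Implicit Defensive.
Import Order.TTheory GRing.Theory Num.Theory.
Local Open Scope ring_scope.

Definition additive_fun (R : realType) (X Y : lmodType R) (g : X -> Y) : Prop :=
  forall x y : X, g (x + y) = g x + g y.

Definition cubic_fun (R : realType) (X Y : lmodType R) (g : X -> Y) : Prop :=
  forall x y : X,
    g (x + y *+ 2) - g (x + y) *+ 3 + g x *+ 3 - g (x - y) = g y *+ 6.

(* Both the equation of the theorem and the existence of the decomposition are
   equivalent to the third-difference equation
     f(x+2y) - 3f(x+y) + 3f(x) - f(x-y) = f(2y) - 2f(y).
   It forces f(4x) = 10f(2x) - 16f(x), so g = f(2.) - 8f and h = f(2.) - 2f
   are homogeneous of degree 1 and 3, which makes g additive and h cubic, while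
   h - g = 6f.  For a solution of the theorem's equation, the defect of the
   third-difference equation, as a function of x for fixed y, is multiplied by
   -3 under x |-> x + y and invariant under x |-> -x - y; hence it vanishes. *)

From HB Require Import structures.
From mathcomp Require Import all_boot all_order all_algebra.
From mathcomp Require Import reals ring.
Set Implicit Arguments. Unset Strict Implicit. Unset Printing Implicit Defensive.
Import Order.TTheory GRing.Theory Num.Theory.
Local Open Scope ring_scope.

Section LinearCombination.
Variable V : zmodType.

Definition lincomb (s : seq V) (p : {poly int}) : V := \sum_(i < size s) s`_i *~ p`_i.

Lemma lincombD s p q : lincomb s (p + q) = lincomb s p + lincomb s q.
Proof. by rewrite /lincomb -big_split; apply: eq_bigr => i _; rewrite coefD mulrzDr. Qed.

Lemma lincombN s p : lincomb s (- p) = - lincomb s p.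
Proof. by rewrite /lincomb -sumrN; apply: eq_bigr => i _; rewrite coefN mulrNz. Qed.

Lemma lincombMn s p n : lincomb s (p *+ n) = lincomb s p *+ n.
Proof.
by rewrite /lincomb -sumrMnl; apply: eq_bigr => i _; rewrite coefMn -mulr_natr mulrzA mulrz_nat.
Qed.

Lemma lincombMz s p z : lincomb s (p *~ z) = lincomb s p *~ z.
Proof. by rewrite /lincomb mulrz_suml; apply: eq_bigr => i _; rewrite coefMrz mulrzz mulrzA. Qed.

Lemma lincomb0 s : lincomb s 0 = 0.
Proof. by rewrite /lincomb big1 // => i _; rewrite coef0 mulr0z. Qed.

Lemma lincombXn s i : (i < size s)%N -> s`_i = lincomb s 'X^i.
Proof.
move=> lt_i_s; rewrite /lincomb (bigD1 (Ordinal lt_i_s)) //= coefXn eqxx mulr1z big1 ?addr0 //.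
move=> j neq_ji; rewrite coefXn; case: eqP => [eq_ji|]; last by rewrite mulr0z.
by case/eqP: neq_ji; apply: val_inj.
Qed.

Lemma addr_eqn (a b l r : V) (c : int) : l = r -> a + l *~ c = b + r *~ c -> a = b.
Proof. by move=> -> /addIr. Qed.

End LinearCombination.
Arguments addr_eqn {V a b l r} c.

(* [zmodlin] proves identities between integer combinations of atoms in a
   zmodType.  Atoms [F u] and [F v] are first identified when [u = v] is itself
   such an identity; the i-th atom is then encoded as the monomial 'X^i, so that
   [ring] on {poly int} decides the identity.  Combined with [addr_eqn], which
   adds an integer multiple of a known equation to both sides of the goal, it
   checks that the goal is a given linear combination of instances. *)
Ltac zl_mem e l :=
  lazymatch l with
  | nil => constr:(false)
  | cons ?a ?l' => lazymatch a with e => constr:(true) | _ => zl_mem e l' end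
  end.

Ltac zl_atoms e acc :=
  lazymatch e with
  | @GRing.add _ ?a ?b => let acc := zl_atoms a acc in zl_atoms b acc
  | @GRing.opp _ ?a => zl_atoms a acc
  | @GRing.natmul _ ?a _ => zl_atoms a acc
  | @intmul _ ?a _ => zl_atoms a acc
  | @GRing.zero _ => acc
  | _ => lazymatch zl_mem e acc with true => acc | false => constr:(cons e acc) end
  end.

Ltac zl_goal_atoms :=
  lazymatch goal with |- @eq ?V ?l ?r =>
    let acc := zl_atoms l (@nil V) in zl_atoms r acc end.

Ltac zl_index s l i :=
  lazymatch l with
  | nil => idtac
  | cons ?a ?l' =>
      let e := fresh "e" in
      have e : a = lincomb s 'X^i := @lincombXn _ s i (erefl true);
      rewrite ?e; clear e; zl_index s l' (S i)
  end.

Ltac zl_close :=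
  let l := zl_goal_atoms in
  let s := fresh "s" in
  pose s := l; zl_index s l 0%N;
  repeat first [ rewrite -(lincombD s) | rewrite -(lincombN s) | rewrite -(lincombMn s)
               | rewrite -(lincombMz s) | rewrite -(lincomb0 s) ];
  apply: (congr1 (lincomb s)); ring.

Ltac zl_merge_with a l :=
  lazymatch l with
  | nil => idtac
  | cons ?b ?l' =>
      try (lazymatch a with ?F ?u => lazymatch b with F ?v =>
             rewrite (_ : b = a); last by apply: (congr1 F); zl_close end end);
      zl_merge_with a l'
  end.

Ltac zl_merge l :=
  lazymatch l with
  | nil => idtac
  | cons ?a ?l' => zl_merge_with a l'; zl_merge l'
  end.

Ltac zmodlin := let l := zl_goal_atoms in zl_merge l; zl_close.

Lemma scaler_natI (R : numFieldType) (V : lmodType R) n :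
  (0 < n)%N -> injective (fun v : V => v *+ n).
Proof. by move=> n_gt0 u v; rewrite -!scaler_nat; apply: scalerI; rewrite pnatr_eq0 -lt0n. Qed.

Lemma shift_reflect_eq0 (R : numFieldType) (X : zmodType) (Y : lmodType R)
    (y : X) (m : X -> Y) :
  (forall x, m (x + y) = - m x *+ 3) -> (forall x, m (- x - y) = m x) -> forall x, m x = 0.
Proof.
move=> m_shift m_reflect.
have mN x : m (- x) = - m x *+ 3 by rewrite -[- x](subrK y) m_shift m_reflect.
move=> x; have := mN (- x); rewrite opprK mN => m_eq_9m.
by apply: (scaler_natI (n := 8)) => //; apply: (addr_eqn 1 m_eq_9m); zmodlin.
Qed.

Section FunctionalEquations.
Variables (R : realType) (X Y : lmodType R).

Definition addcubic_eqn (f : X -> Y) : Prop :=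
  forall x y : X,
    f (x + y *+ 3) *+ 3 - f (x *+ 3 + y)
    = (f (x + y) + f (x - y)) *+ 12 - (f x + f y) *+ 16
      + f (y *+ 2) *+ 12 - f (x *+ 2) *+ 4.

Definition third_diff (f : X -> Y) (x y : X) : Y :=
  f (x + y *+ 2) - f (x + y) *+ 3 + f x *+ 3 - f (x - y).

Definition third_diff_eqn (f : X -> Y) : Prop :=
  forall x y : X, third_diff f x y = f (y *+ 2) - f y *+ 2.

Section ThirdDiffEqn.
Variable f : X -> Y.
Hypothesis Mf : third_diff_eqn f.

Lemma third_diff_eqn0 : f 0 = 0.
Proof. by apply: (addr_eqn (-1) (Mf 0 0)); rewrite /third_diff; zmodlin. Qed.

Lemma third_diff_eqnN x : f (- x) = - f x.
Proof.
apply: (addr_eqn 1 (Mf 0 x)); apply: (addr_eqn (-3) third_diff_eqn0).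
by rewrite /third_diff; zmodlin.
Qed.

Lemma third_diff_eqn_shift3 x y :
  f (x + y *+ 3) = f (x + y) *+ 6 + f (x - y) *+ 3 - (f x + f y) *+ 8 + f (y *+ 2) *+ 4.
Proof.
apply: (addr_eqn (-1) (Mf (x + y) y)); apply: (addr_eqn (-3) (Mf x y)).
by rewrite /third_diff; zmodlin.
Qed.

Lemma addcubic_eqn_of_third_diff : addcubic_eqn f.
Proof.
move=> x y; apply: (addr_eqn (-3) (third_diff_eqn_shift3 x y)).
apply: (addr_eqn 1 (third_diff_eqn_shift3 y x)).
by apply: (addr_eqn 3 (third_diff_eqnN (x - y))); zmodlin.
Qed.

Lemma third_diff_eqn_dilate x : f (x *+ 4) = f (x *+ 2) *+ 10 - f x *+ 16.
Proof.
apply: (addr_eqn (-3) (Mf x x)); apply: (addr_eqn (-1) (Mf (x *+ 2) x)).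
by apply: (addr_eqn (-3) third_diff_eqn0); rewrite /third_diff; zmodlin.
Qed.

Lemma third_diff_eqn_comb k : third_diff_eqn (fun x => f (x *+ 2) - f x *+ k).
Proof.
move=> x y; apply: (addr_eqn (-1) (Mf (x *+ 2) (y *+ 2))); apply: (addr_eqn k (Mf x y)).
by rewrite /third_diff; zmodlin.
Qed.

End ThirdDiffEqn.

Lemma additive_of_third_diff g :
  third_diff_eqn g -> (forall x, g (x *+ 2) = g x *+ 2) -> additive_fun g.
Proof.
move=> Mg g2; have gN := third_diff_eqnN Mg.
have g_sub x y : g x = g (x - y) + g y.
  apply: (scaler_natI (n := 6)) => //.
  apply: (addr_eqn 1 (Mg (x + y) (x - y))); apply: (addr_eqn (-3) (Mg (- y) x)).
  apply: (addr_eqn (-1) (Mg (x - y) x)); apply: (addr_eqn (-1) (g2 x)).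
  apply: (addr_eqn 1 (g2 y)); apply: (addr_eqn 1 (g2 (x - y))).
  apply: (addr_eqn 8 (gN y)); apply: (addr_eqn (-3) (gN (x + y))).
  by rewrite /third_diff; zmodlin.
by move=> x y; rewrite [LHS](g_sub _ y) addrK.
Qed.

Lemma cubic_of_third_diff h :
  third_diff_eqn h -> (forall x, h (x *+ 2) = h x *+ 8) -> cubic_fun h.
Proof. by move=> Mh h2 x y; rewrite [LHS]Mh h2; zmodlin. Qed.

Section CubicFun.
Variable C : X -> Y.
Hypothesis cubicC : cubic_fun C.

Lemma cubic_fun0 : C 0 = 0.
Proof.
apply: (scaler_natI (n := 6)) => //.
by apply: (addr_eqn 1 (cubicC 0 0)); zmodlin.
Qed.

Lemma cubic_funN x : C (- x) = - C x.
Proof.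
apply: (scaler_natI (n := 6)) => //.
by apply: (addr_eqn 1 (cubicC 0 (- x))); apply: (addr_eqn 1 (cubicC (- x) x)); zmodlin.
Qed.

Lemma cubic_fun_double x : C (x *+ 2) = C x *+ 8.
Proof.
apply: (addr_eqn (-1) (cubicC 0 x)); apply: (addr_eqn (-1) (cubic_funN x)).
by apply: (addr_eqn 3 cubic_fun0); zmodlin.
Qed.

Lemma cubic_third_diff : third_diff_eqn C.
Proof. by move=> x y; rewrite /third_diff cubicC cubic_fun_double; zmodlin. Qed.

End CubicFun.

Section AdditiveFun.
Variable A : X -> Y.
Hypothesis additiveA : additive_fun A.

Lemma additive_fun0 : A 0 = 0.
Proof. by apply: (addr_eqn 1 (additiveA 0 0)); zmodlin. Qed.

Lemma additive_funN x : A (- x) = - A x.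
Proof.
by apply: (addr_eqn 1 (additiveA x (- x))); apply: (addr_eqn (-1) additive_fun0); zmodlin.
Qed.

Lemma additive_third_diff : third_diff_eqn A.
Proof.
by move=> x y; rewrite /third_diff !additiveA additive_funN; zmodlin.
Qed.

End AdditiveFun.

Lemma third_diff_eqn_sum f g h : (forall x, f x = g x + h x) ->
  third_diff_eqn g -> third_diff_eqn h -> third_diff_eqn f.
Proof.
move=> fE Mg Mh x y; apply: (addr_eqn (-1) (Mg x y)); apply: (addr_eqn (-1) (Mh x y)).
by rewrite /third_diff !fE; zmodlin.
Qed.

Section AddcubicEqn.
Variable f : X -> Y.
Hypothesis Ef : addcubic_eqn f.

Lemma addcubic_eqn0 : f 0 = 0.
Proof.
apply: (scaler_natI (n := 2)) => //.
by apply: (addr_eqn (-1) (Ef 0 0)); zmodlin.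
Qed.

Lemma addcubic_eqnN x : f (- x) = - f x.
Proof.
apply: (scaler_natI (n := 12)) => //.
apply: (addr_eqn 3 (Ef x 0)); apply: (addr_eqn 1 (Ef 0 x)).
by apply: (addr_eqn (-32) addcubic_eqn0); zmodlin.
Qed.

Lemma addcubic_eqn_shift3 x y :
  f (x + y *+ 3) = f (x + y) *+ 6 + f (x - y) *+ 3 - (f x + f y) *+ 8 + f (y *+ 2) *+ 4.
Proof.
apply: (scaler_natI (n := 8)) => //.
apply: (addr_eqn (-3) (Ef x y)); apply: (addr_eqn (-1) (Ef y x)).
by apply: (addr_eqn (-12) (addcubic_eqnN (x - y))); zmodlin.
Qed.

Lemma third_diff_of_addcubic_eqn : third_diff_eqn f.
Proof.
move=> x y; apply/eqP; rewrite -subr_eq0; apply/eqP; move: x.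
apply: (shift_reflect_eq0 (y := y)) => x; rewrite /third_diff.
  by apply: (addr_eqn (-1) (addcubic_eqn_shift3 x y)); zmodlin.
apply: (addr_eqn (-1) (addcubic_eqnN (x - y))); apply: (addr_eqn 3 (addcubic_eqnN x)).
apply: (addr_eqn (-3) (addcubic_eqnN (x + y))).
by apply: (addr_eqn 1 (addcubic_eqnN (x + y *+ 2))); zmodlin.
Qed.

End AddcubicEqn.

Lemma additive_funZ (a : R) (g : X -> Y) :
  additive_fun g -> additive_fun (fun x => a *: g x).
Proof. by move=> additive_g x y; rewrite additive_g scalerDr. Qed.

Lemma cubic_funZ (a : R) (h : X -> Y) : cubic_fun h -> cubic_fun (fun x => a *: h x).
Proof.
by move=> cubic_h x y; rewrite !scalerMnr -scalerBr -scalerDr -scalerBr cubic_h.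
Qed.

End FunctionalEquations.

Theorem theorem2p3 (R : realType) (X Y : lmodType R) (f : X -> Y) :
  (forall x y : X,
     f (x + y *+ 3) *+ 3 - f (x *+ 3 + y)
     = (f (x + y) + f (x - y)) *+ 12 - (f x + f y) *+ 16
       + f (y *+ 2) *+ 12 - f (x *+ 2) *+ 4)
  <->
  (exists A H C G : X -> Y,
     [/\ additive_fun A, additive_fun H, cubic_fun C, cubic_fun G &
         [/\ (forall x, f x = H x + G x),
             (forall x, H x = A (x *+ 2) - A x *+ 8) &
             (forall x, G x = C (x *+ 2) - C x *+ 2)]]).
Proof.
split=> [/third_diff_of_addcubic_eqn Mf|]; last first.
  case=> A [H [C [G [_ addH _ cubicG [fE _ _]]]]].
  apply: addcubic_eqn_of_third_diff.
  exact: third_diff_eqn_sum fE (additive_third_diff addH) (cubic_third_diff cubicG).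
pose g x := f (x *+ 2) - f x *+ 8; pose h x := f (x *+ 2) - f x *+ 2.
have g2 x : g (x *+ 2) = g x *+ 2.
  by apply: (addr_eqn (-1) (third_diff_eqn_dilate Mf x)); rewrite /g; zmodlin.
have h2 x : h (x *+ 2) = h x *+ 8.
  by apply: (addr_eqn (-1) (third_diff_eqn_dilate Mf x)); rewrite /h; zmodlin.
exists (fun x => 36^-1 *: g x), (fun x => - 6^-1 *: g x),
       (fun x => 36^-1 *: h x), (fun x => 6^-1 *: h x).
have additive_g := additive_of_third_diff (third_diff_eqn_comb Mf 8) g2.
have cubic_h := cubic_of_third_diff (third_diff_eqn_comb Mf 2) h2.
split; do ?[exact: additive_funZ | exact: cubic_funZ]; split=> x.
- rewrite scaleNr addrC -scalerBr (_ : h x - g x = 6%:R *: f x).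
    by rewrite scalerA mulVf ?scale1r // pnatr_eq0.
  by rewrite scaler_nat /g /h; zmodlin.
- by rewrite g2 -scalerMnr !scalerMnl -scalerBl; congr (_ *: _); field.
- by rewrite h2 -scalerMnr !scalerMnl -scalerBl; congr (_ *: _); field.
Qed.
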